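(* Let $|T|$ denote the number of internal vertices of a free marked triangulation $(T,v)$ of an $(m+2)$-gon, distributed according to $\tilde\mu_m$. As $m\to\infty$, the law of $m^{-2}|T|$ converges to the Lévy (completely asymmetric stable of index $1/2$) distribution with density \[ \frac{1}{\sqrt{3\pi}}\,x^{-3/2}e^{-1/(3x)},\qquad x>0 . \] Equivalently, the limit has the law of $\tfrac{2}{3}g^{-2}$, where $g$ is a standard Gaussian, and \[ \lim_{m\to\infty}\tilde\mu_m(|T|>tm^2)=\frac{1}{\sqrt{3\pi}}\int_t^\infty x^{-3/2}e^{-1/(3x)}\,dx \] for every $t>0$.
   Context: $\phi_{n,m}=\frac{2^{n+1}(2m+1)!(2m+3n)!}{m!^2 n!(2m+2n+2)!}$ is the number of rooted type II triangulations (multiple edges allowed, no loops) of a disc with $m+2$ boundary vertices and $n$ internal vertices. Let $\alpha=27/2$. The free marked triangulation of an $(m+2)$-gon is the probability measure $\tilde\mu_m$ on pairs $(T,v)$, where $T$ is such a rooted triangulation and $v$ is an internal vertex of $T$, given by $\tilde\mu_m(T,v)=\alpha^{-|T|}/\tilde Z_m$. Here $|T|$ is the number of internal vertices and $\tilde Z_m=\sum_n n\phi_{n,m}\alpha^{-n}$. *)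

From Stdlib Require Import Reals.
From Coquelicot Require Import Coquelicot.
Open Scope R_scope.

Definition phi (n m : nat) : R :=
  2 ^ (n + 1) * INR (Factorial.fact (2 * m + 1)) * INR (Factorial.fact (2 * m + 3 * n))
  / (INR (Factorial.fact m) ^ 2 * INR (Factorial.fact n) * INR (Factorial.fact (2 * m + 2 * n + 2))).

Definition alpha : R := 27 / 2.

(* Total mass (before normalisation) of marked triangulations (T,v) with |T| = n:
   n choices of the internal vertex v, each of weight alpha^{-n}. *)
Definition weight (m n : nat) : R := INR n * phi n m * / alpha ^ n.

Definition Ztilde (m : nat) : R := Series (weight m).

Definition tail_prob (m : nat) (t : R) : R :=
  Series (fun n => if Rlt_dec (t * INR m ^ 2) (INR n) then weight m n else 0)
  / Ztilde m.

Definition levy_density (x : R) : R :=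
  / sqrt (3 * PI) * Rpower x (- (3 / 2)) * exp (- / (3 * x)).

(* The weights behave like [weight m n ~ C_m n^(-3/2) exp (- m^2 / (3 n))]: the ratio
   [weight m (n+1) / weight m n] is an explicit rational function, and the logarithm of
   [weight m n * n^(3/2) * exp (m^2 / (3 n))] has increments O(m/n^2 + m^3/n^3), which telescope
   to an error o(1) uniformly in [n >= d m^2]. Writing [x = n / m^2], the weight of [n] is then
   proportional to the mass of the Lévy kernel [x^(-3/2) exp (- 1 / (3 x))] on [x, x + 1/m^2], so
   the weights of [n > t m^2] add up to a multiple of its tail beyond [t], while the [n < d m^2]
   contribute O(sqrt d) of the total. Letting [m -> oo] and then [d -> 0] gives the limit. The
   normalisation of the density is the Gaussian integral, obtained by differentiating
   [(int_0^x exp (- s^2) ds)^2 + int_0^1 exp (- x^2 (1 + t^2)) / (1 + t^2) dt]. *)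

From Stdlib Require Import Reals Lra Lia Psatz ZArith.
From Coquelicot Require Import Coquelicot.
Open Scope R_scope.

Lemma continuous_of_ex_derive (f : R -> R) (x : R) : ex_derive f x -> continuous f x.
Proof. exact (ex_derive_continuous f x). Qed.

Lemma ex_RInt_of_continuous (f : R -> R) (a b : R) :
  (forall z, Rmin a b <= z <= Rmax a b -> continuous f z) -> ex_RInt f a b.
Proof. exact (ex_RInt_continuous f a b). Qed.

Lemma exp_le_exp_of_le (x y : R) : x <= y -> exp x <= exp y.
Proof. intros [H| ->]; [left; apply exp_increasing, H | right; reflexivity]. Qed.

Lemma Rdiv_le_div_cross (p q r s : R) : 0 < q -> 0 < s -> p * s <= r * q -> p / q <= r / s.
Proof.
  intros Hq Hs H. apply Rle_div_l; [lra |].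
  replace (r / s * q) with (r * q / s) by (field; lra). apply Rle_div_r; lra.
Qed.

Lemma le_of_is_derive_nonneg (g dg : R -> R) (a b : R) : a <= b ->
  (forall y, a <= y <= b -> is_derive g y (dg y)) ->
  (forall y, a <= y <= b -> 0 <= dg y) -> g a <= g b.
Proof.
  intros Hab Hd Hp.
  destruct (MVT_gen g a b dg) as [c [Hc E]].
  - intros x Hx. rewrite Rmin_left, Rmax_right in Hx by lra. apply Hd; lra.
  - intros x Hx. rewrite Rmin_left, Rmax_right in Hx by lra.
    apply continuity_pt_filterlim, continuous_of_ex_derive. eexists; apply Hd; lra.
  - rewrite Rmin_left, Rmax_right in Hc by lra.
    assert (0 <= dg c * (b - a)) by (apply Rmult_le_pos; [apply Hp; lra | lra]). lra.
Qed.

Lemma is_lim_seq_continuous (u : nat -> R) (l : R) (g : R -> R) :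
  is_lim_seq u l -> continuous g l -> is_lim_seq (fun n => g (u n)) (g l).
Proof. intros Hu Hg. eapply filterlim_comp; [apply Hu | apply Hg]. Qed.

Lemma is_lim_seq_INR_div (c : R) : 0 < c -> is_lim_seq (fun k => INR k / c) p_infty.
Proof.
  intros Hc. apply (is_lim_seq_mult INR (fun _ => / c) p_infty (/ c)).
  - apply is_lim_seq_INR.
  - apply is_lim_seq_const.
  - apply is_Rbar_mult_p_infty_pos. simpl. apply Rinv_0_lt_compat, Hc.
Qed.

Lemma is_lim_seq_inv_INR : is_lim_seq (fun m => / INR m) 0.
Proof. exact (is_lim_seq_inv INR p_infty is_lim_seq_INR ltac:(discriminate)). Qed.

Lemma is_lim_seq_le_le_family (u : nat -> R) (lo hi : nat -> nat -> R) (A B : nat -> R) (L : R) :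
  eventually (fun j => eventually (fun m => lo j m <= u m <= hi j m)) ->
  (forall j, is_lim_seq (lo j) (A j)) -> (forall j, is_lim_seq (hi j) (B j)) ->
  is_lim_seq A L -> is_lim_seq B L -> is_lim_seq u L.
Proof.
  intros Hev Hlo Hhi HA HB. apply is_lim_seq_spec. intros eps.
  assert (He2 : 0 < eps / 2) by (generalize (cond_pos eps); lra).
  set (e2 := mkposreal _ He2).
  destruct (filter_and _ _ Hev (filter_and _ _ (proj2 (is_lim_seq_spec _ _) HA e2)
                                             (proj2 (is_lim_seq_spec _ _) HB e2))) as [j Hj].
  destruct (Hj j (le_n _)) as [Hbounds [HAj HBj]].
  destruct (filter_and _ _ Hbounds (filter_and _ _ (proj2 (is_lim_seq_spec _ _) (Hlo j) e2)
                                                   (proj2 (is_lim_seq_spec _ _) (Hhi j) e2)))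
    as [N HN].
  exists N. intros m Hm. destruct (HN m Hm) as [[H1 H2] [Hl Hh]].
  simpl in HAj, HBj, Hl, Hh.
  apply Rabs_lt_between' in HAj, HBj, Hl, Hh. apply Rabs_lt_between'. lra.
Qed.

(** * Gaussian integral *)

Definition gauss (s : R) : R := exp (- (s * s)).

Definition gauss_int (y : R) : R := RInt gauss 0 y.

Lemma continuous_gauss (x : R) : continuous gauss x.
Proof. apply continuous_of_ex_derive; unfold gauss; auto_derive; auto. Qed.

Lemma is_derive_gauss_int (y : R) : is_derive gauss_int y (gauss y).
Proof.
  apply (is_derive_RInt gauss gauss_int 0 y).
  - apply filter_forall; intros b.
    apply (RInt_correct (V := R_CompleteNormedModule)), ex_RInt_of_continuous.
    intros; apply continuous_gauss.
  - apply continuous_gauss.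
Qed.

Lemma continuous_gauss_int (y : R) : continuous gauss_int y.
Proof. apply continuous_of_ex_derive. eexists; apply is_derive_gauss_int. Qed.

Lemma gauss_int_0 : gauss_int 0 = 0.
Proof. unfold gauss_int. rewrite RInt_point. reflexivity. Qed.

Lemma gauss_int_gt0 (y : R) : 0 < y -> 0 < gauss_int y.
Proof.
  intros Hy. destruct (MVT_gen gauss_int 0 y gauss) as [c [_ E]].
  - intros; apply is_derive_gauss_int.
  - intros; apply continuity_pt_filterlim, continuous_gauss_int.
  - rewrite gauss_int_0 in E. assert (0 < gauss c) by apply exp_pos. nra.
Qed.

Definition gauss_param_int (x : R) : R :=
  RInt (fun t => exp (- (x * x) * (1 + t * t)) / (1 + t * t)) 0 1.

Lemma is_derive_gauss_param_int (x : R) :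
  is_derive gauss_param_int x (- 2 * gauss x * gauss_int x).
Proof.
  set (h y t := exp (- (y * y) * (1 + t * t)) / (1 + t * t)).
  assert (Hpos : forall t, 0 < 1 + t * t) by (intros; nra).
  assert (Hh : forall y t, is_derive (fun z => h z t) y (- 2 * y * exp (- (y * y) * (1 + t * t)))).
  { intros y t. unfold h. auto_derive; [|field]; generalize (Hpos t); lra. }
  replace (- 2 * gauss x * gauss_int x) with (RInt (fun t => Derive (fun u => h u t) x) 0 1).
  - apply (is_derive_RInt_param h 0 1 x).
    + apply filter_forall; intros y t _. eexists; apply Hh.
    + intros t _.
      apply continuity_2d_pt_ext with (fun u v => - 2 * u * exp (- (u * u) * (1 + v * v))).
      { intros u v. symmetry. apply is_derive_unique, Hh. }
      repeat first [ apply continuity_2d_pt_mult | apply continuity_2d_pt_plus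
                   | apply continuity_2d_pt_opp | apply continuity_2d_pt_const
                   | apply continuity_2d_pt_id1 | apply continuity_2d_pt_id2
                   | apply continuity_1d_2d_pt_comp with (f := exp);
                     [apply derivable_continuous_pt, derivable_pt_exp|] ].
    + apply filter_forall; intros y. apply ex_RInt_of_continuous; intros t _.
      apply continuous_of_ex_derive. unfold h; auto_derive. generalize (Hpos t); lra.
  - assert (E : forall t, Derive (fun u => h u t) x = (-2 * gauss x) * (x * gauss (x * t + 0))).
    { intros t. replace (Derive (fun u => h u t) x) with (- 2 * x * exp (- (x * x) * (1 + t * t)))
        by (symmetry; apply is_derive_unique, Hh). unfold gauss.
      replace (- (x * x) * (1 + t * t)) with (- (x * x) + - ((x * t + 0) * (x * t + 0))) by ring.
      rewrite exp_plus. ring. }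
    rewrite (RInt_ext _ _ _ _ (fun t _ => E t)).
    rewrite (RInt_scal (V := R_CompleteNormedModule) _ _ _ (-2 * gauss x)).
    + rewrite (RInt_comp_lin (V := R_CompleteNormedModule)).
      * unfold gauss_int, scal; simpl; unfold mult; simpl.
        rewrite Rmult_0_r, Rplus_0_r, Rmult_1_r, Rplus_0_r. reflexivity.
      * apply ex_RInt_of_continuous; intros; apply continuous_gauss.
    + apply ex_RInt_of_continuous; intros. apply continuous_of_ex_derive.
      unfold gauss; auto_derive; auto.
Qed.

Lemma gauss_int_sqr_add_param_int (x : R) : gauss_int x * gauss_int x + gauss_param_int x = PI / 4.
Proof.
  set (F y := gauss_int y * gauss_int y + gauss_param_int y).
  assert (HF : forall y, is_derive F y 0).
  { intros y. unfold F.
    replace 0 with (gauss y * gauss_int y + gauss_int y * gauss y + (- 2 * gauss y * gauss_int y))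
      by ring.
    apply (is_derive_plus (fun y => gauss_int y * gauss_int y) gauss_param_int).
    - apply (is_derive_mult gauss_int gauss_int); try apply is_derive_gauss_int.
      intros; apply Rmult_comm.
    - apply is_derive_gauss_param_int. }
  assert (Hconst : F x = F 0).
  { assert (H := is_RInt_derive F (fun _ => 0) 0 x (fun y _ => HF y)
                   (fun y _ => continuous_const 0 y)).
    apply is_RInt_unique in H. rewrite RInt_const in H.
    unfold scal, minus, plus, opp in H; simpl in H; unfold mult in H; simpl in H. lra. }
  assert (HF0 : F 0 = PI / 4).
  { unfold F, gauss_param_int. rewrite gauss_int_0.
    rewrite (RInt_ext _ (fun t => / (1 + t * t))).
    2:{ intros t _. rewrite Rmult_0_r, Ropp_0, Rmult_0_l, exp_0. unfold Rdiv. apply Rmult_1_l. }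
    rewrite (is_RInt_unique _ 0 1 (atan 1 - atan 0)).
    - rewrite atan_1, atan_0; ring.
    - apply (is_RInt_derive (V := R_CompleteNormedModule) atan).
      + intros y _. exact (is_derive_atan y).
      + intros y _. apply continuous_of_ex_derive. auto_derive. nra. }
  unfold F in Hconst, HF0. lra.
Qed.

Lemma gauss_param_int_bounds (x : R) : 0 <= gauss_param_int x <= gauss x.
Proof.
  assert (Hex : ex_RInt (fun t => exp (- (x * x) * (1 + t * t)) / (1 + t * t)) 0 1).
  { apply ex_RInt_of_continuous; intros t _. apply continuous_of_ex_derive. auto_derive. nra. }
  unfold gauss_param_int. split.
  - apply RInt_ge_0; [lra | exact Hex |].
    intros t _. apply Rlt_le, Rdiv_lt_0_compat; [apply exp_pos | nra].
  - replace (gauss x) with (RInt (fun _ => gauss x) 0 1)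
      by (rewrite RInt_const; unfold scal; simpl; unfold mult; simpl; ring).
    apply RInt_le; [lra | exact Hex | apply ex_RInt_const |].
    intros t Ht. unfold gauss.
    assert (exp (- (x * x) * (1 + t * t)) <= exp (- (x * x))) by (apply exp_le_exp_of_le; nra).
    apply Rle_trans with (exp (- (x * x) * (1 + t * t))); [| lra].
    apply Rle_div_l; [nra |].
    assert (0 < exp (- (x * x) * (1 + t * t))) by apply exp_pos. nra.
Qed.

Lemma is_lim_gauss_int : is_lim gauss_int p_infty (sqrt PI / 2).
Proof.
  assert (Hparam : is_lim gauss_param_int p_infty 0).
  { apply is_lim_le_le_loc with (fun _ => 0) gauss.
    - apply filter_forall; intros y; apply gauss_param_int_bounds.
    - apply is_lim_const.
    - apply (is_lim_comp exp (fun x => - (x * x)) p_infty 0 m_infty).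
      + apply is_lim_exp_m.
      + apply (is_lim_opp (fun x => x * x) p_infty p_infty).
        apply (is_lim_mult (fun x => x) (fun x => x) p_infty p_infty p_infty);
          [apply is_lim_id | apply is_lim_id | simpl; auto].
      + simpl; exists 0; intros; discriminate. }
  apply is_lim_ext_loc with (fun x => sqrt (PI / 4 - gauss_param_int x)).
  { exists 0. intros y Hy. rewrite <- (gauss_int_sqr_add_param_int y).
    replace (_ + _ - _) with (gauss_int y * gauss_int y) by ring.
    apply sqrt_square, Rlt_le, gauss_int_gt0; lra. }
  replace (sqrt PI / 2) with (sqrt (PI / 4 - 0)).
  - apply (is_lim_comp_continuous (fun x => PI / 4 - gauss_param_int x) sqrt).
    + apply (is_lim_minus (fun _ => PI / 4) gauss_param_int p_infty (PI / 4) 0);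
        [apply is_lim_const | exact Hparam | reflexivity].
    + apply continuous_of_ex_derive. auto_derive. generalize PI_RGT_0; lra.
  - rewrite Rminus_0_r. replace (PI / 4) with (PI * (/ 2 * / 2)) by field.
    rewrite sqrt_mult, sqrt_square by (generalize PI_RGT_0; lra). field.
Qed.

(** * The Lévy kernel and its tail *)

Definition levy_kernel (x : R) : R := exp (- / (3 * x)) / (x * sqrt x).

(* [levy_tail x] is the integral of [levy_kernel] over [x, +oo), by the substitution
   s = 1 / sqrt (3 y). *)
Definition levy_tail (x : R) : R := 2 * sqrt 3 * gauss_int (/ sqrt (3 * x)).

Lemma levy_kernel_pos (x : R) : 0 < x -> 0 < levy_kernel x.
Proof.
  intros Hx. apply Rdiv_lt_0_compat; [apply exp_pos |].
  apply Rmult_lt_0_compat; [lra | apply sqrt_lt_R0, Hx].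
Qed.

Lemma levy_density_eq (x : R) : 0 < x -> levy_density x = levy_kernel x / sqrt (3 * PI).
Proof.
  intros Hx. unfold levy_density, levy_kernel.
  assert (0 < sqrt x) by (apply sqrt_lt_R0; lra).
  assert (0 < sqrt (3 * PI)) by (apply sqrt_lt_R0; generalize PI_RGT_0; lra).
  rewrite Rpower_Ropp. replace (3 / 2) with (1 + / 2) by field.
  rewrite Rpower_plus, Rpower_1, Rpower_sqrt by lra.
  field. lra.
Qed.

Lemma is_derive_levy_tail (x : R) : 0 < x -> is_derive levy_tail x (- levy_kernel x).
Proof.
  intros Hx. unfold levy_tail, levy_kernel.
  assert (Hsx : 0 < sqrt x) by (apply sqrt_lt_R0; lra).
  assert (Hs3 : 0 < sqrt 3) by (apply sqrt_lt_R0; lra).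
  assert (E3 : sqrt 3 * sqrt 3 = 3) by (apply sqrt_sqrt; lra).
  assert (Ex : sqrt x * sqrt x = x) by (apply sqrt_sqrt; lra).
  replace (- (exp (- / (3 * x)) / (x * sqrt x)))
    with (2 * sqrt 3 * (- / (2 * x * sqrt 3 * sqrt x) * gauss (/ sqrt (3 * x)))).
  - apply (is_derive_scal (fun y => gauss_int (/ sqrt (3 * y)))).
    apply (is_derive_comp gauss_int (fun y => / sqrt (3 * y))); [apply is_derive_gauss_int |].
    auto_derive.
    + rewrite sqrt_mult by lra. repeat split; try lra. apply Rgt_not_eq, Rmult_lt_0_compat; lra.
    + rewrite sqrt_mult by lra.
      replace (sqrt 3 * sqrt x * (sqrt 3 * sqrt x)) with (3 * x) by nra. field. lra.
  - unfold gauss. rewrite <- Rinv_mult, sqrt_sqrt by lra. field. lra.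
Qed.

Lemma continuous_levy_tail (x : R) : 0 < x -> continuous levy_tail x.
Proof. intros Hx. apply continuous_of_ex_derive. eexists; apply is_derive_levy_tail, Hx. Qed.

Lemma levy_tail_pos (x : R) : 0 < x -> 0 < levy_tail x.
Proof.
  intros Hx. apply Rmult_lt_0_compat.
  - apply Rmult_lt_0_compat; [lra | apply sqrt_lt_R0; lra].
  - apply gauss_int_gt0, Rinv_0_lt_compat, sqrt_lt_R0. lra.
Qed.

Lemma is_lim_levy_tail_p_infty : is_lim levy_tail p_infty 0.
Proof.
  assert (H : is_lim (fun x => gauss_int (/ sqrt (3 * x))) p_infty (gauss_int 0)).
  { apply (is_lim_comp_continuous (fun x => / sqrt (3 * x)) gauss_int); [| apply continuous_gauss_int].
    apply (is_lim_inv (fun x => sqrt (3 * x)) p_infty p_infty); [| discriminate].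
    apply is_lim_sqrt_p, is_lim_le_p_loc with (fun x => x); [exists 0; intros; lra | apply is_lim_id]. }
  apply (is_lim_scal_l _ (2 * sqrt 3)) in H. simpl in H.
  rewrite gauss_int_0, Rmult_0_r in H. exact H.
Qed.

Lemma continuous_levy_density (x : R) : 0 < x -> continuous levy_density x.
Proof.
  intros Hx. apply continuous_ext_loc with (fun y => levy_kernel y / sqrt (3 * PI)).
  - eapply filter_imp; [| exact (open_gt 0 x Hx)].
    intros y Hy. symmetry; apply levy_density_eq, Hy.
  - apply continuous_of_ex_derive. unfold levy_kernel. auto_derive.
    assert (0 < sqrt x) by (apply sqrt_lt_R0; lra).
    repeat split; try lra. apply Rgt_not_eq, Rmult_lt_0_compat; lra.
Qed.

Lemma filter_prod_at_point_p_infty (t : R) (P : R -> Prop) : (forall x, t <= x -> P x) ->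
  filter_prod (at_point t) (Rbar_locally p_infty)
    (fun ab : R * R => forall x, Rmin (fst ab) (snd ab) <= x <= Rmax (fst ab) (snd ab) -> P x).
Proof.
  intros HP. apply Filter_prod with (fun x => x = t) (fun y => t < y);
    [reflexivity | exists t; auto |].
  intros a b -> Hb x Hx. simpl in Hx. rewrite Rmin_left in Hx by lra. apply HP. lra.
Qed.

Lemma is_RInt_gen_levy_density (t : R) : 0 < t ->
  is_RInt_gen levy_density (at_point t) (Rbar_locally p_infty) (levy_tail t / sqrt (3 * PI)).
Proof.
  intros Ht.
  set (F x := - / sqrt (3 * PI) * levy_tail x).
  assert (HF : forall x, 0 < x -> is_derive F x (levy_density x)).
  { intros x Hx. rewrite levy_density_eq by exact Hx. unfold F, Rdiv.
    replace (levy_kernel x * / sqrt (3 * PI)) with (- / sqrt (3 * PI) * - levy_kernel x) by ring.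
    apply is_derive_scal, is_derive_levy_tail, Hx. }
  apply is_RInt_gen_ext with (Derive F).
  { eapply filter_imp;
      [| apply (filter_prod_at_point_p_infty t (fun x => Derive F x = levy_density x))].
    - intros ab H x Hx. apply H. lra.
    - intros x Hx. apply is_derive_unique, HF. lra. }
  replace (levy_tail t / sqrt (3 * PI)) with (0 - F t)
    by (unfold F; field; apply Rgt_not_eq, sqrt_lt_R0; generalize PI_RGT_0; lra).
  apply is_RInt_gen_Derive.
  - apply filter_prod_at_point_p_infty. intros x Hx. eexists; apply HF. lra.
  - apply filter_prod_at_point_p_infty. intros x Hx.
    apply continuous_ext_loc with levy_density; [| apply continuous_levy_density; lra].
    eapply filter_imp; [| exact (open_gt 0 x ltac:(lra))].
    intros y Hy. symmetry; apply is_derive_unique, HF, Hy.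
  - intros P HP. apply locally_singleton in HP. exact HP.
  - assert (H := is_lim_scal_l _ (- / sqrt (3 * PI)) _ _ is_lim_levy_tail_p_infty).
    simpl in H. rewrite Rmult_0_r in H. exact H.
Qed.

Lemma levy_tail_mvt (a b : R) : 0 < a <= b ->
  exists xi, a <= xi <= b /\ levy_tail a - levy_tail b = (b - a) * levy_kernel xi.
Proof.
  intros Hab.
  destruct (MVT_gen levy_tail a b (fun x => - levy_kernel x)) as [xi [Hxi E]].
  - intros x Hx. rewrite Rmin_left, Rmax_right in Hx by lra. apply is_derive_levy_tail. lra.
  - intros x Hx. rewrite Rmin_left, Rmax_right in Hx by lra.
    apply continuity_pt_filterlim, continuous_levy_tail. lra.
  - rewrite Rmin_left, Rmax_right in Hxi by lra.
    exists xi. split; [exact Hxi | lra].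
Qed.

Lemma levy_kernel_le_exp_mul_shift (d delta x xi : R) : 0 < d <= x -> x <= xi <= x + delta ->
  levy_kernel x <= exp (2 * delta / d) * levy_kernel xi.
Proof.
  intros Hd Hxi. unfold levy_kernel. rewrite Rmult_div_assoc.
  set (a := sqrt x). set (b := sqrt xi). set (c := delta / x).
  assert (Ha : 0 < a) by (apply sqrt_lt_R0; lra).
  assert (Hab : a <= b) by (apply sqrt_le_1_alt; lra).
  assert (Ea : a * a = x) by (apply sqrt_sqrt; lra).
  assert (Eb : b * b = xi) by (apply sqrt_sqrt; lra).
  assert (Hc : 0 <= c <= delta / d).
  { split; [apply Rdiv_le_0_compat; lra |].
    apply Rmult_le_compat_l; [lra | apply Rinv_le_contravar; lra]. }
  assert (Hsq : (1 + c) * (1 + c) <= exp (2 * delta / d)).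
  { replace (2 * delta / d) with (delta / d + delta / d) by (field; lra).
    rewrite exp_plus. generalize (exp_ineq1_le (delta / d)). nra. }
  (* xi^(3/2) <= x^(3/2) (1 + c)^2, because b/a <= (b/a)^2 <= 1 + c *)
  assert (Hpow : xi * b <= x * a * ((1 + c) * (1 + c))).
  { assert (Hxx : xi <= x * (1 + c)) by (unfold c; field_simplify; lra).
    assert (b * a <= b * b) by nra.
    assert (b <= a * (1 + c)) by nra.
    replace (x * a * ((1 + c) * (1 + c))) with (x * (1 + c) * (a * (1 + c))) by ring.
    apply Rmult_le_compat; nra. }
  assert (exp (- / (3 * x)) <= exp (- / (3 * xi)))
    by (apply exp_le_exp_of_le, Ropp_le_contravar, Rinv_le_contravar; lra).
  assert (0 < exp (- / (3 * xi))) by apply exp_pos.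
  apply Rdiv_le_div_cross; try nra.
  apply Rle_trans with (exp (- / (3 * xi)) * (x * a * ((1 + c) * (1 + c)))).
  - apply Rmult_le_compat; try nra. left; apply exp_pos.
  - replace (exp (2 * delta / d) * exp (- / (3 * xi)) * (x * a))
      with (exp (- / (3 * xi)) * (x * a * exp (2 * delta / d))) by ring.
    apply Rmult_le_compat_l; [lra |]. apply Rmult_le_compat_l; nra.
Qed.

Lemma levy_kernel_shift_le_exp_mul (d delta x xi : R) : 0 < d <= x -> x <= xi <= x + delta ->
  levy_kernel xi <= exp (delta / (3 * (d * d))) * levy_kernel x.
Proof.
  intros Hd Hxi. unfold levy_kernel. rewrite Rmult_div_assoc.
  assert (Hx : 0 < x * sqrt x) by (apply Rmult_lt_0_compat; [| apply sqrt_lt_R0]; lra).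
  assert (Hxxi : x * sqrt x <= xi * sqrt xi)
    by (apply Rmult_le_compat; try apply sqrt_le_1_alt; try apply sqrt_pos; lra).
  assert (He : exp (- / (3 * xi)) <= exp (delta / (3 * (d * d))) * exp (- / (3 * x))).
  { rewrite <- exp_plus. apply exp_le_exp_of_le.
    assert ((xi - x) / (3 * x * xi) <= delta / (3 * (d * d))).
    { assert (d * d <= x * xi) by (apply Rmult_le_compat; lra).
      apply Rdiv_le_div_cross; nra. }
    replace (- / (3 * xi)) with ((xi - x) / (3 * x * xi) - / (3 * x)) by (field; lra). lra. }
  apply Rdiv_le_div_cross; [lra | lra |].
  apply Rle_trans with (exp (delta / (3 * (d * d))) * exp (- / (3 * x)) * (x * sqrt x)).
  - apply Rmult_le_compat_r; lra.
  - apply Rmult_le_compat_l; [| lra].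
    generalize (exp_pos (delta / (3 * (d * d)))) (exp_pos (- / (3 * x))). nra.
Qed.

Lemma mul_levy_kernel_le (x : R) : 0 < x -> x * levy_kernel x <= 3 * sqrt x.
Proof.
  intros Hx. unfold levy_kernel.
  assert (Hs : 0 < sqrt x) by (apply sqrt_lt_R0; lra).
  assert (Es : sqrt x * sqrt x = x) by (apply sqrt_sqrt; lra).
  assert (He : exp (- / (3 * x)) <= 3 * x).
  { assert (Hy : 0 < / (3 * x)) by (apply Rinv_0_lt_compat; lra).
    rewrite exp_Ropp. replace (3 * x) with (/ / (3 * x)) at 2 by (field; lra).
    apply Rinv_le_contravar; [exact Hy |]. generalize (exp_ineq1_le (/ (3 * x))). lra. }
  replace (x * (exp (- / (3 * x)) / (x * sqrt x))) with (exp (- / (3 * x)) / sqrt x) by (field; lra).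
  apply Rle_div_l; lra.
Qed.

(** * Asymptotics of the weights *)

Lemma INR_fact_pos (n : nat) : 0 < INR (Factorial.fact n).
Proof. apply lt_0_INR, Factorial.lt_O_fact. Qed.

Lemma weight_0 (m : nat) : weight m 0 = 0.
Proof. unfold weight. simpl. ring. Qed.

Lemma weight_pos (m n : nat) : (1 <= n)%nat -> 0 < weight m n.
Proof.
  intros Hn. unfold weight, phi, alpha.
  assert (0 < INR n) by (apply lt_0_INR; lia).
  generalize (INR_fact_pos m) (INR_fact_pos n) (INR_fact_pos (2 * m + 1))
    (INR_fact_pos (2 * m + 3 * n)) (INR_fact_pos (2 * m + 2 * n + 2)); intros.
  assert (0 < (27 / 2) ^ n) by (apply pow_lt; lra).
  assert (0 < 2 ^ (n + 1)) by (apply pow_lt; lra).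
  unfold Rdiv. repeat (apply Rmult_lt_0_compat || apply Rinv_0_lt_compat || apply pow_lt); lra.
Qed.

Lemma weight_nonneg (m n : nat) : 0 <= weight m n.
Proof. destruct n; [rewrite weight_0; lra | left; apply weight_pos; lia]. Qed.

Definition weight_ratio (m k : nat) : R :=
  4 * (2 * INR m + 3 * INR k + 1) * (2 * INR m + 3 * INR k + 2) * (2 * INR m + 3 * INR k + 3)
  / (27 * INR k * (2 * INR m + 2 * INR k + 3) * (2 * INR m + 2 * INR k + 4)).

Lemma weight_succ (m k : nat) : (1 <= k)%nat -> weight m (S k) = weight m k * weight_ratio m k.
Proof.
  intros Hk. unfold weight, phi, weight_ratio, alpha.
  replace (2 * m + 3 * S k)%nat with (S (S (S (2 * m + 3 * k)))) by lia.
  replace (2 * m + 2 * S k + 2)%nat with (S (S (2 * m + 2 * k + 2))) by lia.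
  replace (S k + 1)%nat with (S (k + 1)) by lia.
  rewrite !fact_simpl, !mult_INR, !S_INR.
  rewrite !plus_INR, !mult_INR. simpl pow. rewrite !S_INR. simpl INR.
  assert (0 < INR k) by (apply lt_0_INR; lia).
  generalize (INR_fact_pos m) (INR_fact_pos k) (INR_fact_pos (2 * m + 1))
    (INR_fact_pos (2 * m + 3 * k)) (INR_fact_pos (2 * m + 2 * k + 2)) (pos_INR m); intros.
  assert (0 < (27 / 2) ^ k) by (apply pow_lt; lra).
  assert (0 < 2 ^ (k + 1)) by (apply pow_lt; lra).
  field. repeat split; try (apply Rgt_not_eq, INR_fact_pos); lra.
Qed.

Lemma weight_1 (n : nat) :
  weight 1 n
  = weight 0 n * (6 * (3 * INR n + 2) * (3 * INR n + 1) / ((2 * INR n + 4) * (2 * INR n + 3))).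
Proof.
  unfold weight, phi.
  replace (2 * 1 + 3 * n)%nat with (S (S (2 * 0 + 3 * n))) by lia.
  replace (2 * 1 + 2 * n + 2)%nat with (S (S (2 * 0 + 2 * n + 2))) by lia.
  rewrite !fact_simpl, !mult_INR, !S_INR, !plus_INR, !mult_INR. simpl.
  generalize (INR_fact_pos n) (INR_fact_pos (3 * n)) (INR_fact_pos (n + (n + 0) + 2)) (pos_INR n); intros.
  assert (0 < (27 / 2) ^ n) by (apply pow_lt; lra).
  unfold alpha. field. repeat split; lra.
Qed.

Lemma weight_0_le_1 (n : nat) : weight 0 n <= weight 1 n.
Proof.
  rewrite weight_1. assert (0 <= INR n) by apply pos_INR.
  assert (1 <= 6 * (3 * INR n + 2) * (3 * INR n + 1) / ((2 * INR n + 4) * (2 * INR n + 3)))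
    by (apply Rle_div_r; nra).
  generalize (weight_nonneg 0 n). nra.
Qed.

Lemma weight_ratio_ge_1 (m k : nat) :
  12 <= INR m -> (1 <= k)%nat -> 6 * INR k <= INR m * INR m -> 1 <= weight_ratio m k.
Proof.
  intros HM Hk H6. assert (HK : 1 <= INR k) by (apply (le_INR 1); lia).
  unfold weight_ratio. set (M := INR m) in *. set (K := INR k) in *.
  apply Rle_div_r; [repeat apply Rmult_lt_0_compat; lra |].
  assert (162 * K * K <= 27 * K * (M * M)) by nra.
  assert (0 <= 9 * (M * M) - 90 * M - 192) by nra.
  assert (90 * M * K + 192 * K <= 9 * (M * M) * K) by nra.
  assert (0 <= M * M * M) by (repeat apply Rmult_le_pos; lra).
  nra.
Qed.

Lemma weight_le_of_le (m n n0 : nat) :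
  12 <= INR m -> 6 * (INR n0 - 1) <= INR m * INR m -> (n <= n0)%nat -> weight m n <= weight m n0.
Proof.
  intros HM. induction n0 as [| k IH]; intros H6 Hn.
  - replace n with 0%nat by lia. lra.
  - destruct (Nat.eq_dec n (S k)) as [-> | Hne]; [lra |].
    rewrite S_INR in H6.
    apply Rle_trans with (weight m k); [apply IH; [assert (0 <= INR k) by apply pos_INR; lra | lia] |].
    destruct k as [| k]; [rewrite weight_0; apply weight_nonneg |].
    rewrite (weight_succ m (S k)) by lia.
    generalize (weight_pos m (S k) ltac:(lia)) (weight_ratio_ge_1 m (S k) HM ltac:(lia) ltac:(lra)).
    nra.
Qed.

(* [log_corr m n] is the logarithmic error in the asymptotics
   [weight m n ~ C_m n^(-3/2) exp (- m^2 / (3 n))]. *)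
Definition log_corr (m n : nat) : R :=
  ln (weight m n) + 3 / 2 * ln (INR n) + INR m * INR m / (3 * INR n).

Lemma weight_eq_log_corr (m n : nat) : (1 <= m)%nat -> (1 <= n)%nat ->
  weight m n = exp (log_corr m n) * levy_kernel (INR n / (INR m * INR m)) / (INR m * INR m * INR m).
Proof.
  intros Hm Hn.
  assert (HN : 0 < INR n) by (apply lt_0_INR; lia).
  assert (HM : 0 < INR m) by (apply lt_0_INR; lia).
  assert (Hs : 0 < sqrt (INR n)) by (apply sqrt_lt_R0, HN).
  assert (E32 : exp (3 / 2 * ln (INR n)) = INR n * sqrt (INR n)).
  { replace (3 / 2 * ln (INR n)) with (ln (INR n) + / 2 * ln (INR n)) by field.
    rewrite exp_plus, exp_ln, <- Rpower_sqrt by exact HN. reflexivity. }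
  unfold log_corr, levy_kernel. rewrite !exp_plus, exp_ln, E32 by (apply weight_pos, Hn).
  rewrite sqrt_div_alt, sqrt_square by nra.
  replace (/ (3 * (INR n / (INR m * INR m)))) with (INR m * INR m / (3 * INR n)) by (field; lra).
  rewrite exp_Ropp. generalize (exp_pos (INR m * INR m / (3 * INR n))). intros. field. lra.
Qed.

Lemma ln_1p_ge (x : R) : 0 <= x -> x - x * x / 2 <= ln (1 + x).
Proof.
  intros Hx.
  assert (H : ln (1 + 0) - 0 + 0 * 0 / 2 <= ln (1 + x) - x + x * x / 2).
  { apply (le_of_is_derive_nonneg (fun y => ln (1 + y) - y + y * y / 2) (fun y => y * y / (1 + y)));
      [exact Hx | |].
    - intros y Hy. auto_derive; [lra | field; lra].
    - intros y Hy. apply Rdiv_le_0_compat; nra. }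
  rewrite Rplus_0_r, ln_1 in H. lra.
Qed.

Lemma ln_1p_le (x : R) : 0 <= x -> ln (1 + x) <= x - x * x / 2 + x * x * x / 3.
Proof.
  intros Hx.
  assert (H : 0 - 0 * 0 / 2 + 0 * 0 * 0 / 3 - ln (1 + 0) <= x - x * x / 2 + x * x * x / 3 - ln (1 + x)).
  { apply (le_of_is_derive_nonneg (fun y => y - y * y / 2 + y * y * y / 3 - ln (1 + y))
             (fun y => y * y * y / (1 + y))); [exact Hx | |].
    - intros y Hy. auto_derive; [lra | field; lra].
    - intros y Hy. apply Rdiv_le_0_compat; [apply Rmult_le_pos |]; nra. }
  rewrite Rplus_0_r, ln_1 in H. lra.
Qed.

Lemma ln_ratio_expansion_bound (M u : R) : 0 <= M -> 0 < u <= 1 ->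
  Rabs (ln (1 + (2 * M + 1) * u / 3) + ln (1 + (2 * M + 2) * u / 3) + ln (1 + (2 * M + 3) * u / 3)
        - ln (1 + (2 * M + 3) * u / 2) - ln (1 + (2 * M + 4) * u / 2) + 3 / 2 * ln (1 + u)
        - M * M * u * u / (3 * (1 + u)))
  <= 3 * (M + 2) * u * u + 2 * (M + 2) ^ 3 * (u * u * u).
Proof.
  intros HM Hu.
  set (x1 := (2 * M + 1) * u / 3). set (x2 := (2 * M + 2) * u / 3). set (x3 := (2 * M + 3) * u / 3).
  set (y1 := (2 * M + 3) * u / 2). set (y2 := (2 * M + 4) * u / 2).
  set (c := M * M * u * u / (3 * (1 + u))).
  assert (0 <= x1) by (unfold x1; apply Rmult_le_pos; [apply Rmult_le_pos |]; lra).
  assert (0 <= x2) by (unfold x2; apply Rmult_le_pos; [apply Rmult_le_pos |]; lra).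
  assert (0 <= x3) by (unfold x3; apply Rmult_le_pos; [apply Rmult_le_pos |]; lra).
  assert (0 <= y1) by (unfold y1; apply Rmult_le_pos; [apply Rmult_le_pos |]; lra).
  assert (0 <= y2) by (unfold y2; apply Rmult_le_pos; [apply Rmult_le_pos |]; lra).
  generalize (ln_1p_ge x1) (ln_1p_ge x2) (ln_1p_ge x3) (ln_1p_ge y1) (ln_1p_ge y2) (ln_1p_ge u)
    (ln_1p_le x1) (ln_1p_le x2) (ln_1p_le x3) (ln_1p_le y1) (ln_1p_le y2) (ln_1p_le u).
  intros L1 L2 L3 L4 L5 L6 U1 U2 U3 U4 U5 U6.
  assert (Hc : M * M * u * u / 3 - M * M * u * u * u / 3 <= c <= M * M * u * u / 3).
  { assert (0 <= M * M * u * u) by (repeat apply Rmult_le_pos; nra).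
    unfold c. split.
    - apply Rle_div_r; nra.
    - apply Rle_div_l; nra. }
  assert (0 <= M * u * u) by (apply Rmult_le_pos; nra).
  assert (0 <= M * u * u * u) by (repeat apply Rmult_le_pos; nra).
  assert (0 <= M * M * u * u * u) by (repeat apply Rmult_le_pos; nra).
  assert (0 <= M * M * M * u * u * u) by (repeat apply Rmult_le_pos; nra).
  assert (0 <= u * u * u) by (repeat apply Rmult_le_pos; nra).
  apply Rabs_le; split.
  - assert (- (3 * (M + 2) * u * u + 2 * (M + 2) ^ 3 * (u * u * u))
      <= (x1 - x1 * x1 / 2) + (x2 - x2 * x2 / 2) + (x3 - x3 * x3 / 2)
         - (y1 - y1 * y1 / 2 + y1 * y1 * y1 / 3) - (y2 - y2 * y2 / 2 + y2 * y2 * y2 / 3)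
         + 3 / 2 * (u - u * u / 2) - c) by (unfold x1, x2, x3, y1, y2; nra).
    specialize (L1 ltac:(lra)). specialize (L2 ltac:(lra)). specialize (L3 ltac:(lra)).
    specialize (U4 ltac:(lra)). specialize (U5 ltac:(lra)). specialize (L6 ltac:(lra)). lra.
  - assert ((x1 - x1 * x1 / 2 + x1 * x1 * x1 / 3) + (x2 - x2 * x2 / 2 + x2 * x2 * x2 / 3)
         + (x3 - x3 * x3 / 2 + x3 * x3 * x3 / 3) - (y1 - y1 * y1 / 2) - (y2 - y2 * y2 / 2)
         + 3 / 2 * (u - u * u / 2 + u * u * u / 3) - c
      <= 3 * (M + 2) * u * u + 2 * (M + 2) ^ 3 * (u * u * u)) by (unfold x1, x2, x3, y1, y2; nra).
    specialize (U1 ltac:(lra)). specialize (U2 ltac:(lra)). specialize (U3 ltac:(lra)).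
    specialize (L4 ltac:(lra)). specialize (L5 ltac:(lra)). specialize (U6 ltac:(lra)). lra.
Qed.

Lemma log_corr_succ_sub (m k : nat) : (1 <= k)%nat ->
  let M := INR m in let u := / INR k in
  log_corr m (S k) - log_corr m k =
    ln (1 + (2 * M + 1) * u / 3) + ln (1 + (2 * M + 2) * u / 3) + ln (1 + (2 * M + 3) * u / 3)
    - ln (1 + (2 * M + 3) * u / 2) - ln (1 + (2 * M + 4) * u / 2) + 3 / 2 * ln (1 + u)
    - M * M * u * u / (3 * (1 + u)).
Proof.
  intros Hk M u.
  assert (HK : 1 <= INR k) by (apply (le_INR 1); lia).
  assert (HM : 0 <= M) by apply pos_INR.
  assert (Hu : 0 < u) by (apply Rinv_0_lt_compat; lra).
  assert (HKu : INR k = / u) by (unfold u; rewrite Rinv_inv; reflexivity).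
  assert (Hpos : forall a, 0 <= a -> 0 < 1 + a * u) by (intros; nra).
  assert (Hratio : weight_ratio m k = (1 + (2 * M + 1) * u / 3) * (1 + (2 * M + 2) * u / 3)
            * (1 + (2 * M + 3) * u / 3) / ((1 + (2 * M + 3) * u / 2) * (1 + (2 * M + 4) * u / 2))).
  { unfold weight_ratio. fold M. rewrite HKu. field. repeat split; nra. }
  unfold log_corr. rewrite weight_succ, S_INR, ln_mult by
    (try exact Hk; try (apply weight_pos; exact Hk); rewrite Hratio;
     apply Rdiv_lt_0_compat; repeat apply Rmult_lt_0_compat; nra).
  rewrite Hratio, ln_div, !ln_mult by (repeat apply Rmult_lt_0_compat; nra).
  replace (INR k + 1) with (INR k * (1 + u)) by (rewrite HKu; field; lra).
  rewrite ln_mult by lra. fold M. rewrite HKu. field. lra.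
Qed.

Lemma log_corr_step (m k : nat) : (1 <= k)%nat ->
  Rabs (log_corr m (S k) - log_corr m k) <=
    3 * (INR m + 2) * (/ INR k * / INR k) + 2 * (INR m + 2) ^ 3 * (/ INR k * / INR k * / INR k).
Proof.
  intros Hk. rewrite (log_corr_succ_sub m k Hk).
  assert (HK : 1 <= INR k) by (apply (le_INR 1); lia).
  rewrite <- Rmult_assoc.
  apply ln_ratio_expansion_bound; [apply pos_INR | split].
  - apply Rinv_0_lt_compat; lra.
  - rewrite <- Rinv_1. apply Rinv_le_contravar; lra.
Qed.

Definition log_corr_bound (m k : nat) : R :=
  6 * (INR m + 2) / INR k + 2 * (INR m + 2) ^ 3 / (INR k * INR k).

Lemma log_corr_bound_nonneg (m k : nat) : (1 <= k)%nat -> 0 <= log_corr_bound m k.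
Proof.
  intros Hk. assert (HK : 1 <= INR k) by (apply (le_INR 1); lia).
  assert (0 <= INR m) by apply pos_INR. assert (0 <= (INR m + 2) ^ 3) by (apply pow_le; lra).
  unfold log_corr_bound. apply Rplus_le_le_0_compat; apply Rdiv_le_0_compat; nra.
Qed.

Lemma log_corr_step_le_bound_sub (m k : nat) : (2 <= k)%nat ->
  3 * (INR m + 2) * (/ INR k * / INR k) + 2 * (INR m + 2) ^ 3 * (/ INR k * / INR k * / INR k)
  <= log_corr_bound m k - log_corr_bound m (S k).
Proof.
  intros Hk. unfold log_corr_bound. rewrite S_INR.
  assert (HK : 2 <= INR k) by (apply (le_INR 2); lia).
  assert (HM : 0 <= INR m) by apply pos_INR.
  set (M := INR m) in *. set (K := INR k) in *.
  assert (0 <= (M + 2) ^ 3) by (apply pow_le; lra).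
  set (C := (M + 2) ^ 3) in *.
  enough (0 <= (3 * (M + 2) * (K - 1) * K * (K + 1) + 2 * C * (K * K - K - 1))
                / (K * K * K * (K + 1) * (K + 1))).
  { replace (6 * (M + 2) / K + 2 * C / (K * K) - (6 * (M + 2) / (K + 1) + 2 * C / ((K + 1) * (K + 1))))
      with (3 * (M + 2) * (/ K * / K) + 2 * C * (/ K * / K * / K)
            + (3 * (M + 2) * (K - 1) * K * (K + 1) + 2 * C * (K * K - K - 1))
              / (K * K * K * (K + 1) * (K + 1))) by (field; lra).
    lra. }
  apply Rdiv_le_0_compat; [| repeat apply Rmult_lt_0_compat; lra].
  apply Rplus_le_le_0_compat; [repeat apply Rmult_le_pos | apply Rmult_le_pos]; nra.
Qed.

Lemma log_corr_close (m n N : nat) : (2 <= n)%nat -> (n <= N)%nat ->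
  Rabs (log_corr m N - log_corr m n) <= log_corr_bound m n.
Proof.
  intros Hn HN.
  assert (Htele : forall d, Rabs (log_corr m (n + d) - log_corr m n)
                              <= log_corr_bound m n - log_corr_bound m (n + d)).
  { induction d as [| d IH].
    - rewrite Nat.add_0_r, Rminus_eq_0, Rminus_eq_0, Rabs_R0. lra.
    - rewrite Nat.add_succ_r.
      generalize (log_corr_step m (n + d) ltac:(lia)) (log_corr_step_le_bound_sub m (n + d) ltac:(lia)).
      intros H1 H2.
      replace (log_corr m (S (n + d)) - log_corr m n)
        with ((log_corr m (S (n + d)) - log_corr m (n + d)) + (log_corr m (n + d) - log_corr m n)) by ring.
      eapply Rle_trans; [apply Rabs_triang | lra]. }
  assert (E : N = (n + (N - n))%nat) by lia. rewrite E.
  generalize (Htele (N - n)%nat) (log_corr_bound_nonneg m (n + (N - n)) ltac:(lia)). lra.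
Qed.

Definition kernel_mass (m n : nat) : R :=
  levy_tail (INR n / (INR m * INR m)) - levy_tail ((INR n + 1) / (INR m * INR m)).

Definition weight_scale (m n0 : nat) : R := exp (log_corr m n0) / INR m.

(* Bound on the relative error of [weight m n ~ weight_scale m n0 * kernel_mass m n]
   for [n >= n0 >= d m^2], with [u = 1/m]. *)
Definition approx_err (d u : R) : R :=
  6 * (u + 2 * u * u) / d + 2 * u * (1 + 2 * u) ^ 3 / (d * d) + 2 * (u * u) / d + u * u / (3 * (d * d)).

Lemma log_corr_bound_le (m n0 : nat) (d : R) :
  0 < d -> (1 <= m)%nat -> d * (INR m * INR m) <= INR n0 ->
  log_corr_bound m n0 <= 6 * (/ INR m + 2 * / INR m * / INR m) / d
                        + 2 * / INR m * (1 + 2 * / INR m) ^ 3 / (d * d).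
Proof.
  intros Hd Hm H. assert (HM : 1 <= INR m) by (apply (le_INR 1); lia).
  unfold log_corr_bound. set (M := INR m) in *. set (N0 := INR n0) in *.
  assert (HdM : 0 < d * (M * M)) by (apply Rmult_lt_0_compat; nra).
  assert (0 <= (M + 2) ^ 3) by (apply pow_le; lra).
  replace (6 * (/ M + 2 * / M * / M) / d + 2 * / M * (1 + 2 * / M) ^ 3 / (d * d))
    with (6 * (M + 2) / (d * (M * M)) + 2 * (M + 2) ^ 3 / (d * (M * M) * (d * (M * M))))
    by (field; lra).
  apply Rplus_le_compat; apply Rdiv_le_div_cross; try nra.
  apply Rmult_le_compat_l; [lra |]. apply Rmult_le_compat; lra.
Qed.

Lemma exp_mul_sandwich (r g a b p q : R) : Rabs r <= g -> 0 <= a -> 0 <= b -> 0 < q ->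
  p <= exp a * q -> q <= exp b * p ->
  exp (- (g + a + b)) * q <= exp r * p <= exp (g + a + b) * q.
Proof.
  intros Hr Ha Hb Hq Hpq Hqp. apply Rabs_le_between in Hr.
  assert (Hp : 0 < p) by (generalize (exp_pos b); nra).
  split.
  - apply Rle_trans with (exp r * (exp (- b) * q)).
    + rewrite <- Rmult_assoc, <- exp_plus. apply Rmult_le_compat_r; [lra |].
      apply exp_le_exp_of_le. lra.
    + apply Rmult_le_compat_l; [left; apply exp_pos |].
      apply (Rmult_le_reg_l (exp b)); [apply exp_pos |].
      rewrite <- Rmult_assoc, <- exp_plus, Rplus_opp_r, exp_0. lra.
  - apply Rle_trans with (exp r * (exp a * q)); [apply Rmult_le_compat_l; [left; apply exp_pos | lra] |].
    rewrite <- Rmult_assoc, <- exp_plus. apply Rmult_le_compat_r; [lra |].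
    apply exp_le_exp_of_le. lra.
Qed.

Lemma weight_kernel_mass_bounds (m n0 n : nat) (d : R) :
  (1 <= m)%nat -> 0 < d -> d * (INR m * INR m) <= INR n0 -> (2 <= n0)%nat -> (n0 <= n)%nat ->
  exp (- approx_err d (/ INR m)) * (weight_scale m n0 * kernel_mass m n) <= weight m n <=
  exp (approx_err d (/ INR m)) * (weight_scale m n0 * kernel_mass m n).
Proof.
  intros Hm Hd Hn0 H2 Hn.
  assert (HM : 1 <= INR m) by (apply (le_INR 1); lia).
  assert (HN : INR n0 <= INR n) by (apply le_INR, Hn).
  set (M := INR m) in *. set (u := / M).
  set (x := INR n / (M * M)). set (delta := / (M * M)).
  assert (Hdelta : delta = u * u) by (unfold delta, u; field; lra).
  assert (Hdx : d <= x) by (apply Rle_div_r; nra).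
  destruct (levy_tail_mvt x (x + delta)) as [xi [Hxi Hmass]].
  { assert (0 < delta) by (apply Rinv_0_lt_compat; nra). lra. }
  assert (R1 := levy_kernel_le_exp_mul_shift d delta x xi (conj Hd Hdx) ltac:(lra)).
  assert (R2 := levy_kernel_shift_le_exp_mul d delta x xi (conj Hd Hdx) ltac:(lra)).
  set (C := exp (log_corr m n0) / (M * M * M)).
  assert (HC : 0 < C) by (apply Rdiv_lt_0_compat; [apply exp_pos | nra]).
  assert (Escale : weight_scale m n0 * kernel_mass m n = C * levy_kernel xi).
  { unfold weight_scale, kernel_mass, C. fold M x.
    replace ((INR n + 1) / (M * M)) with (x + delta) by (unfold x, delta; field; lra).
    rewrite Hmass. replace (x + delta - x) with delta by ring. unfold delta. field. lra. }
  assert (Eweight : weight m n = C * (exp (log_corr m n - log_corr m n0) * levy_kernel x)).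
  { rewrite weight_eq_log_corr by lia. unfold C. fold M x.
    replace (log_corr m n) with (log_corr m n0 + (log_corr m n - log_corr m n0)) at 1 by ring.
    rewrite exp_plus. field. lra. }
  assert (Hr : Rabs (log_corr m n - log_corr m n0)
               <= 6 * (u + 2 * u * u) / d + 2 * u * (1 + 2 * u) ^ 3 / (d * d)).
  { eapply Rle_trans; [apply log_corr_close; lia |].
    apply log_corr_bound_le; [exact Hd | exact Hm | exact Hn0]. }
  rewrite Hdelta in R1, R2.
  destruct (exp_mul_sandwich _ _ (2 * (u * u) / d) (u * u / (3 * (d * d)))
              (levy_kernel x) (levy_kernel xi) Hr) as [S1 S2];
    try (apply Rdiv_le_0_compat; nra); try (apply levy_kernel_pos; lra); try assumption.
  rewrite Escale, Eweight, !(Rmult_comm (exp _) (C * _)), !Rmult_assoc.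
  unfold approx_err. split; apply Rmult_le_compat_l; lra.
Qed.

(** * Series of weights *)

Definition head_part (N : nat) (a : nat -> R) (n : nat) : R := if (n <? N)%nat then a n else 0.
Definition tail_part (N : nat) (a : nat -> R) (n : nat) : R := if (N <=? n)%nat then a n else 0.

Lemma head_part_add_tail_part (N : nat) (a : nat -> R) (n : nat) :
  head_part N a n + tail_part N a n = a n.
Proof.
  unfold head_part, tail_part. destruct (Nat.ltb_spec n N), (Nat.leb_spec N n); try lia; ring.
Qed.

Lemma Series_head_add_tail (N : nat) (a : nat -> R) :
  ex_series (head_part N a) -> ex_series (tail_part N a) ->
  ex_series a /\ Series a = Series (head_part N a) + Series (tail_part N a).
Proof.
  intros H1 H2. split.
  - apply (ex_series_ext (fun n => plus (head_part N a n) (tail_part N a n))).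
    + intros n. apply head_part_add_tail_part.
    + apply (ex_series_plus (V := R_NormedModule)); assumption.
  - rewrite <- Series_plus by assumption. apply Series_ext. intros n.
    symmetry. apply head_part_add_tail_part.
Qed.

Lemma is_series_head_part (N : nat) (a : nat -> R) :
  is_series (head_part N a) (sum_n (head_part N a) N).
Proof.
  change (is_lim_seq (sum_n (head_part N a)) (sum_n (head_part N a) N)).
  apply (is_lim_seq_ext_loc (fun _ => sum_n (head_part N a) N)); [| apply is_lim_seq_const].
  exists N. intros k Hk. induction Hk as [| k Hk IH]; [reflexivity |].
  rewrite sum_Sn, <- IH.
  replace (head_part N a (S k)) with 0
    by (unfold head_part; destruct (Nat.ltb_spec (S k) N); [lia | reflexivity]).
  symmetry. apply (plus_zero_r (G := R_AbelianGroup)).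
Qed.

Lemma sum_n_head_part_const (N : nat) (c : R) : sum_n (head_part N (fun _ => c)) N = INR N * c.
Proof.
  destruct N as [| N]; [rewrite sum_O; unfold head_part; simpl; ring |].
  rewrite sum_Sn.
  replace (head_part (S N) (fun _ => c) (S N)) with 0
    by (unfold head_part; rewrite Nat.ltb_irrefl; reflexivity).
  rewrite (sum_n_ext_loc _ (fun _ => c)), sum_n_const.
  - apply (plus_zero_r (G := R_AbelianGroup)).
  - intros n Hn. unfold head_part. destruct (Nat.ltb_spec n (S N)); [reflexivity | lia].
Qed.

Lemma Series_head_part_bounds (N : nat) (a : nat -> R) (c : R) :
  (forall n, (n < N)%nat -> 0 <= a n <= c) ->
  ex_series (head_part N a) /\ 0 <= Series (head_part N a) <= INR N * c.
Proof.
  intros Ha.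
  assert (Hle : forall n, 0 <= head_part N a n <= head_part N (fun _ => c) n).
  { intros n. unfold head_part. destruct (Nat.ltb_spec n N); [apply Ha; lia | lra]. }
  assert (Hc := is_series_head_part N (fun _ => c)). rewrite sum_n_head_part_const in Hc.
  split; [| split].
  - eexists. apply is_series_head_part.
  - rewrite (is_series_unique _ _ (is_series_head_part N a)), sum_n_Reals.
    apply cond_pos_sum. intros n. apply Hle.
  - rewrite <- (is_series_unique _ _ Hc). apply Series_le; [exact Hle | eexists; exact Hc].
Qed.

Lemma Series_tail_part_bounds (N : nat) (a b : nat -> R) (B c1 c2 : R) :
  0 <= c1 -> is_series (tail_part N b) B ->
  (forall n, (N <= n)%nat -> 0 <= b n /\ c1 * b n <= a n <= c2 * b n) ->
  ex_series (tail_part N a) /\ c1 * B <= Series (tail_part N a) <= c2 * B.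
Proof.
  intros Hc1 HB Hab.
  assert (Hle : forall n, 0 <= c1 * tail_part N b n <= tail_part N a n
                          /\ tail_part N a n <= c2 * tail_part N b n).
  { intros n. unfold tail_part. destruct (Nat.leb_spec N n) as [Hn | Hn]; [| lra].
    destruct (Hab n Hn) as [Hb [H1 H2]]. split; [split; [nra | lra] | lra]. }
  assert (Hex2 : ex_series (fun n => c2 * tail_part N b n))
    by (apply (ex_series_scal_l c2 (tail_part N b)); eexists; exact HB).
  assert (Hex : ex_series (tail_part N a)).
  { apply (ex_series_le (tail_part N a) (fun n => c2 * tail_part N b n)); [| exact Hex2].
    intros n. unfold norm; simpl. unfold abs; simpl.
    rewrite Rabs_pos_eq by (destruct (Hle n); lra). apply Hle. }
  split; [exact Hex |].
  rewrite <- (is_series_unique _ _ HB), <- !Series_scal_l.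
  split; apply Series_le; try assumption; intros n; destruct (Hle n); split; lra.
Qed.

Lemma kernel_mass_pos (m n : nat) : (1 <= m)%nat -> (1 <= n)%nat -> 0 < kernel_mass m n.
Proof.
  intros Hm Hn.
  assert (HM0 : 0 < INR m) by (apply lt_0_INR; lia).
  assert (HM : 0 < INR m * INR m) by nra.
  assert (HN : 0 < INR n) by (apply lt_0_INR; lia).
  destruct (levy_tail_mvt (INR n / (INR m * INR m)) ((INR n + 1) / (INR m * INR m))) as [xi [Hxi E]].
  { split; [apply Rdiv_lt_0_compat; lra |].
    apply Rmult_le_compat_r; [left; apply Rinv_0_lt_compat |]; lra. }
  unfold kernel_mass. rewrite E.
  assert (0 < INR n / (INR m * INR m)) by (apply Rdiv_lt_0_compat; lra).
  apply Rmult_lt_0_compat; [| apply levy_kernel_pos; lra].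
  replace ((INR n + 1) / (INR m * INR m) - INR n / (INR m * INR m)) with (/ (INR m * INR m))
    by (field; lra).
  apply Rinv_0_lt_compat, HM.
Qed.

Lemma sum_n_tail_part_kernel_mass (m N k : nat) :
  (sum_n (tail_part N (kernel_mass m)) k : R)
  = if (N <=? k)%nat
    then levy_tail (INR N / (INR m * INR m)) - levy_tail ((INR k + 1) / (INR m * INR m)) else 0.
Proof.
  rewrite sum_n_Reals. induction k as [| k IH]; simpl sum_f_R0.
  - unfold tail_part. destruct (N <=? 0)%nat eqn:E; [| reflexivity].
    apply Nat.leb_le in E. replace N with 0%nat by lia. reflexivity.
  - rewrite IH. unfold tail_part, kernel_mass. rewrite S_INR.
    destruct (Nat.leb_spec N k), (Nat.leb_spec N (S k)); try lia.
    + ring.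
    + replace N with (S k) by lia. rewrite S_INR. ring.
    + ring.
Qed.

Lemma is_series_tail_part_kernel_mass (m N : nat) : (1 <= m)%nat ->
  is_series (tail_part N (kernel_mass m)) (levy_tail (INR N / (INR m * INR m))).
Proof.
  intros Hm.
  assert (HM : 0 < INR m * INR m) by (assert (0 < INR m) by (apply lt_0_INR; lia); nra).
  change (is_lim_seq (sum_n (tail_part N (kernel_mass m))) (levy_tail (INR N / (INR m * INR m)))).
  apply (is_lim_seq_ext_loc
           (fun k => levy_tail (INR N / (INR m * INR m)) - levy_tail ((INR k + 1) / (INR m * INR m)))).
  { exists N. intros k Hk. rewrite sum_n_tail_part_kernel_mass.
    destruct (Nat.leb_spec N k); [reflexivity | lia]. }
  assert (Hlim : is_lim_seq (fun k => (INR k + 1) / (INR m * INR m)) p_infty).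
  { apply is_lim_seq_le_p_loc with (fun k => INR k / (INR m * INR m)).
    - exists O. intros k _. apply Rmult_le_compat_r; [left; apply Rinv_0_lt_compat |]; lra.
    - apply is_lim_seq_INR_div, HM. }
  generalize (is_lim_seq_minus' (fun _ => levy_tail (INR N / (INR m * INR m))) _ _ 0
                (is_lim_seq_const _)
                (is_lim_comp_seq levy_tail _ p_infty 0 is_lim_levy_tail_p_infty
                   ltac:(exists O; easy) Hlim)).
  rewrite Rminus_0_r. easy.
Qed.

Lemma Series_tail_part_weight_bounds (m n0 N : nat) (d : R) :
  (1 <= m)%nat -> 0 < d -> d * (INR m * INR m) <= INR n0 -> (2 <= n0)%nat -> (n0 <= N)%nat ->
  ex_series (tail_part N (weight m)) /\
  exp (- approx_err d (/ INR m)) * weight_scale m n0 * levy_tail (INR N / (INR m * INR m))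
    <= Series (tail_part N (weight m)) <=
  exp (approx_err d (/ INR m)) * weight_scale m n0 * levy_tail (INR N / (INR m * INR m)).
Proof.
  intros Hm Hd Hn0 H2 HN.
  assert (Hscale : 0 < weight_scale m n0)
    by (apply Rdiv_lt_0_compat; [apply exp_pos | apply lt_0_INR; lia]).
  apply (Series_tail_part_bounds N (weight m) (kernel_mass m)).
  - generalize (exp_pos (- approx_err d (/ INR m))). nra.
  - apply is_series_tail_part_kernel_mass, Hm.
  - intros n Hn. split; [left; apply kernel_mass_pos; lia |].
    rewrite !Rmult_assoc. apply weight_kernel_mass_bounds; assumption || lia.
Qed.

Lemma Series_head_part_weight_le (m n0 : nat) (d : R) :
  12 <= INR m -> (1 <= n0)%nat -> 6 * (INR n0 - 1) <= INR m * INR m ->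
  INR n0 <= 2 * d * (INR m * INR m) ->
  ex_series (head_part n0 (weight m)) /\
  0 <= Series (head_part n0 (weight m)) <= 3 * sqrt (2 * d) * weight_scale m n0.
Proof.
  intros HM Hn0 H6 H2d.
  assert (Hm : (1 <= m)%nat) by (apply INR_le; simpl; lra).
  assert (HN0 : 1 <= INR n0) by (apply (le_INR 1), Hn0).
  destruct (Series_head_part_bounds n0 (weight m) (weight m n0)) as [Hex [H0 H1]].
  { intros n Hn. split; [apply weight_nonneg | apply weight_le_of_le; [lra | lra | lia]]. }
  split; [exact Hex | split; [exact H0 |]].
  set (x0 := INR n0 / (INR m * INR m)).
  assert (Hx0 : 0 < x0) by (apply Rdiv_lt_0_compat; nra).
  assert (Hx0d : x0 <= 2 * d) by (apply Rle_div_l; nra).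
  assert (E : INR n0 * weight m n0 = weight_scale m n0 * (x0 * levy_kernel x0)).
  { rewrite weight_eq_log_corr by lia. unfold weight_scale, x0. field. lra. }
  assert (Hs : sqrt x0 <= sqrt (2 * d)) by (apply sqrt_le_1_alt, Hx0d).
  assert (Hscale : 0 < weight_scale m n0) by (apply Rdiv_lt_0_compat; [apply exp_pos | lra]).
  generalize (mul_levy_kernel_le x0 Hx0). nra.
Qed.

(** * The limit law *)

Definition nat_up (x : R) : nat := Z.to_nat (up x).

Lemma nat_up_spec (x : R) : 0 <= x -> x < INR (nat_up x) <= x + 1.
Proof.
  intros Hx. destruct (archimed x) as [A B].
  assert (Hz : (0 <= up x)%Z) by (apply le_IZR; simpl; lra).
  unfold nat_up. rewrite INR_IZR_INZ, Z2Nat.id by exact Hz. lra.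
Qed.

Lemma nat_up_le_iff (x : R) (n : nat) : 0 <= x -> (nat_up x <= n)%nat <-> x < INR n.
Proof.
  intros Hx. destruct (nat_up_spec x Hx) as [H1 H2]. split.
  - intros Hn. apply le_INR in Hn. lra.
  - intros Hn. destruct (archimed x) as [A B].
    assert (Hz : (0 <= up x)%Z) by (apply le_IZR; simpl; lra).
    apply Nat2Z.inj_le. unfold nat_up. rewrite Z2Nat.id by exact Hz.
    apply Z.lt_succ_r, lt_IZR. rewrite succ_IZR, <- INR_IZR_INZ. lra.
Qed.

Lemma ratio_sandwich (K e c T A B P1 P0 : R) : 0 < K -> 0 <= P1 -> 0 < P0 ->
  exp (- e) * K * P1 <= T <= exp e * K * P1 -> exp (- e) * K * P0 <= B <= exp e * K * P0 ->
  0 <= A <= c * K ->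
  P1 / (exp e * (c + exp e * P0)) <= T / (A + B) <= exp e * exp e * P1 / P0.
Proof.
  rewrite exp_Ropp. intros HK HP1 HP0 HT HB HA.
  assert (HE : 0 < exp e) by apply exp_pos. set (E := exp e) in *.
  assert (HKT : K * P1 <= T * E) by (apply Rle_div_l; [lra | unfold Rdiv; nra]).
  assert (HKB : K * P0 <= B * E) by (apply Rle_div_l; [lra | unfold Rdiv; nra]).
  assert (HB0 : 0 < B) by (assert (0 < K * P0) by nra; nra).
  assert (Hc : 0 <= c) by nra.
  split; apply Rdiv_le_div_cross; try nra.
  - assert (P1 * A <= T * E * c) by (apply Rle_trans with (P1 * (c * K)); nra).
    assert (P1 * B <= T * E * (E * P0)) by (apply Rle_trans with (P1 * (E * K * P0)); nra).
    nra.
  - apply Rle_trans with (E * K * P1 * P0); [apply Rmult_le_compat_r; lra |].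
    assert (0 <= E * E * P1 * A) by (repeat apply Rmult_le_pos; lra).
    apply Rle_trans with (E * E * P1 * B); [| lra].
    replace (E * K * P1 * P0) with (E * P1 * (K * P0)) by ring.
    replace (E * E * P1 * B) with (E * P1 * (B * E)) by ring.
    apply Rmult_le_compat_l; nra.
Qed.

Definition grid_point (c : R) (m : nat) : R := INR (nat_up (c * (INR m * INR m))) / (INR m * INR m).

Lemma tail_prob_eq (m n0 : nat) (t : R) : 0 <= t ->
  ex_series (head_part n0 (weight m)) -> ex_series (tail_part n0 (weight m)) ->
  tail_prob m t = Series (tail_part (nat_up (t * (INR m * INR m))) (weight m))
                  / (Series (head_part n0 (weight m)) + Series (tail_part n0 (weight m))).
Proof.
  intros Ht Hhead Htail. unfold tail_prob, Ztilde.
  rewrite (proj2 (Series_head_add_tail n0 (weight m) Hhead Htail)).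
  f_equal. apply Series_ext. intros n. unfold tail_part.
  replace (INR m ^ 2) with (INR m * INR m) by ring.
  assert (Hx : 0 <= t * (INR m * INR m)) by (assert (0 <= INR m) by apply pos_INR; nra).
  destruct (Rlt_dec _ _) as [Hlt | Hge], (Nat.leb_spec (nat_up (t * (INR m * INR m))) n) as [Hn | Hn];
    try reflexivity.
  - apply (nat_up_le_iff _ n Hx) in Hlt. lia.
  - apply (nat_up_le_iff _ n Hx) in Hn. lra.
Qed.

Definition err_factor (d : R) (m : nat) : R := exp (approx_err d (/ INR m)).

Definition tail_prob_lower (t d : R) (m : nat) : R :=
  levy_tail (grid_point t m)
  / (err_factor d m * (3 * sqrt (2 * d) + err_factor d m * levy_tail (grid_point d m))).

Definition tail_prob_upper (t d : R) (m : nat) : R :=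
  err_factor d m * err_factor d m * levy_tail (grid_point t m) / levy_tail (grid_point d m).

Lemma tail_prob_sandwich (m : nat) (t d : R) :
  0 < d <= 1 / 6 -> d <= t -> 12 <= INR m -> 1 <= d * (INR m * INR m) ->
  tail_prob_lower t d m <= tail_prob m t <= tail_prob_upper t d m.
Proof.
  intros Hd Hdt HM HdM.
  assert (Hm : (1 <= m)%nat) by (apply INR_le; simpl; lra).
  set (n0 := nat_up (d * (INR m * INR m))). set (n1 := nat_up (t * (INR m * INR m))).
  destruct (nat_up_spec (d * (INR m * INR m))) as [Hn0l Hn0u]; [lra |]. fold n0 in Hn0l, Hn0u.
  assert (Hn02 : (2 <= n0)%nat) by (apply (INR_lt 1); simpl; lra).
  assert (Hn01 : (n0 <= n1)%nat).
  { apply nat_up_le_iff; [nra |].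
    destruct (nat_up_spec (t * (INR m * INR m))) as [Hn1 _]; [nra |]. fold n1 in Hn1.
    assert (d * (INR m * INR m) <= t * (INR m * INR m)) by (apply Rmult_le_compat_r; nra). lra. }
  assert (H6 : 6 * (INR n0 - 1) <= INR m * INR m) by nra.
  assert (H2d : INR n0 <= 2 * d * (INR m * INR m)) by lra.
  destruct (Series_head_part_weight_le m n0 d HM ltac:(lia) H6 H2d) as [ExA HA].
  destruct (Series_tail_part_weight_bounds m n0 n0 d Hm ltac:(lra) ltac:(lra) Hn02 (le_n _))
    as [ExB HB].
  destruct (Series_tail_part_weight_bounds m n0 n1 d Hm ltac:(lra) ltac:(lra) Hn02 Hn01) as [_ HT].
  rewrite (tail_prob_eq m n0 t) by (lra || assumption).
  unfold tail_prob_lower, tail_prob_upper, err_factor.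
  apply ratio_sandwich with (K := weight_scale m n0); try assumption.
  - apply Rdiv_lt_0_compat; [apply exp_pos | lra].
  - left. apply levy_tail_pos, Rdiv_lt_0_compat; [apply (lt_INR 0); lia | nra].
  - apply levy_tail_pos, Rdiv_lt_0_compat; [apply (lt_INR 0); lia | nra].
Qed.

Lemma tail_prob_sandwich_eventually (t d : R) : 0 < d <= 1 / 6 -> d <= t ->
  eventually (fun m => tail_prob_lower t d m <= tail_prob m t <= tail_prob_upper t d m).
Proof.
  intros Hd Hdt.
  destruct (proj2 (is_lim_seq_spec _ _) is_lim_seq_INR (Rmax 12 (/ d))) as [N HN].
  exists N. intros m Hm. specialize (HN m Hm). simpl in HN.
  assert (H12 : 12 <= INR m) by (generalize (Rmax_l 12 (/ d)); lra).
  assert (Hinv : / d <= INR m) by (generalize (Rmax_r 12 (/ d)); lra).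
  assert (1 <= d * INR m) by (rewrite <- (Rinv_r d) by lra; apply Rmult_le_compat_l; lra).
  apply tail_prob_sandwich; [exact Hd | exact Hdt | exact H12 | nra].
Qed.

Lemma is_lim_seq_grid_point (c : R) : 0 <= c -> is_lim_seq (grid_point c) c.
Proof.
  intros Hc.
  apply is_lim_seq_le_le_loc with (fun _ => c) (fun m => c + / INR m * / INR m).
  - exists 1%nat. intros m Hm. assert (HM : 1 <= INR m) by (apply (le_INR 1); lia).
    destruct (nat_up_spec (c * (INR m * INR m))) as [H1 H2]; [nra |].
    unfold grid_point. split.
    + apply Rle_div_r; [nra | lra].
    + apply Rle_div_l; [nra |].
      replace ((c + / INR m * / INR m) * (INR m * INR m)) with (c * (INR m * INR m) + 1) by (field; lra).
      exact H2.
  - apply is_lim_seq_const.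
  - rewrite <- (Rplus_0_r c) at 1. rewrite <- (Rmult_0_l 0).
    apply (is_lim_seq_plus' (fun _ => c)); [apply is_lim_seq_const |].
    apply is_lim_seq_mult'; apply is_lim_seq_inv_INR.
Qed.

Lemma is_lim_seq_approx_err (d : R) : 0 < d -> is_lim_seq (fun m => approx_err d (/ INR m)) 0.
Proof.
  intros Hd. replace 0 with (approx_err d 0) by (unfold approx_err; field; lra).
  apply is_lim_seq_continuous; [apply is_lim_seq_inv_INR |].
  apply continuous_of_ex_derive. unfold approx_err. auto_derive. repeat split; lra.
Qed.

Lemma is_lim_seq_err_factor (d : R) : 0 < d -> is_lim_seq (err_factor d) 1.
Proof.
  intros Hd. rewrite <- exp_0. apply is_lim_seq_continuous; [apply is_lim_seq_approx_err, Hd |].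
  apply continuous_of_ex_derive. auto_derive. exact I.
Qed.

Lemma is_lim_seq_levy_tail_grid_point (c : R) : 0 < c ->
  is_lim_seq (fun m => levy_tail (grid_point c m)) (levy_tail c).
Proof.
  intros Hc. apply is_lim_seq_continuous;
    [apply is_lim_seq_grid_point; lra | apply continuous_levy_tail, Hc].
Qed.

Lemma is_lim_seq_tail_prob_lower (t d : R) : 0 < t -> 0 < d ->
  is_lim_seq (tail_prob_lower t d) (levy_tail t / (3 * sqrt (2 * d) + levy_tail d)).
Proof.
  intros Ht Hd.
  assert (Hpos : 0 < 3 * sqrt (2 * d) + levy_tail d)
    by (generalize (sqrt_pos (2 * d)) (levy_tail_pos d Hd); lra).
  replace (levy_tail t / (3 * sqrt (2 * d) + levy_tail d))
    with (levy_tail t / (1 * (3 * sqrt (2 * d) + 1 * levy_tail d))) by (rewrite !Rmult_1_l; reflexivity).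
  apply is_lim_seq_div'; [apply is_lim_seq_levy_tail_grid_point, Ht | | lra].
  apply is_lim_seq_mult'; [apply is_lim_seq_err_factor, Hd |].
  apply (is_lim_seq_plus' (fun _ => _)); [apply is_lim_seq_const |].
  apply is_lim_seq_mult'; [apply is_lim_seq_err_factor, Hd | apply is_lim_seq_levy_tail_grid_point, Hd].
Qed.

Lemma is_lim_seq_tail_prob_upper (t d : R) : 0 < t -> 0 < d ->
  is_lim_seq (tail_prob_upper t d) (levy_tail t / levy_tail d).
Proof.
  intros Ht Hd.
  replace (levy_tail t / levy_tail d) with (1 * 1 * levy_tail t / levy_tail d)
    by (rewrite !Rmult_1_l; reflexivity).
  apply is_lim_seq_div';
    [| apply is_lim_seq_levy_tail_grid_point, Hd | generalize (levy_tail_pos d Hd); lra].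
  apply is_lim_seq_mult'; [apply is_lim_seq_mult'; apply is_lim_seq_err_factor, Hd |].
  apply is_lim_seq_levy_tail_grid_point, Ht.
Qed.

(* Scales [d_j] along which [levy_tail] is explicit: [1 / sqrt (3 d_j) = j + 2]. *)
Definition small_scale (j : nat) : R := / (3 * ((INR j + 2) * (INR j + 2))).

Lemma small_scale_pos (j : nat) : 0 < small_scale j.
Proof. unfold small_scale. assert (0 <= INR j) by apply pos_INR. apply Rinv_0_lt_compat. nra. Qed.

Lemma small_scale_le (j : nat) : small_scale j <= 1 / 6.
Proof.
  unfold small_scale. assert (0 <= INR j) by apply pos_INR.
  replace (1 / 6) with (/ 6) by field. apply Rinv_le_contravar; nra.
Qed.

Lemma is_lim_seq_small_scale : is_lim_seq small_scale 0.
Proof.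
  assert (Hlim : is_lim_seq (fun j => / (INR j + 2)) 0).
  { apply (is_lim_seq_inv (fun j => INR j + 2) p_infty); [| discriminate].
    apply is_lim_seq_le_p_loc with INR; [exists O; intros; lra | apply is_lim_seq_INR]. }
  apply (is_lim_seq_ext (fun j => / 3 * (/ (INR j + 2) * / (INR j + 2)))).
  { intros j. unfold small_scale. assert (0 <= INR j) by apply pos_INR. field. lra. }
  replace 0 with (/ 3 * (0 * 0)) by ring.
  apply (is_lim_seq_mult' (fun _ => _)); [apply is_lim_seq_const | apply is_lim_seq_mult'; exact Hlim].
Qed.

Lemma is_lim_seq_levy_tail_small_scale :
  is_lim_seq (fun j => levy_tail (small_scale j)) (sqrt (3 * PI)).
Proof.
  apply (is_lim_seq_ext (fun j => 2 * sqrt 3 * gauss_int (INR j + 2))).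
  { intros j. unfold levy_tail, small_scale. assert (0 <= INR j) by apply pos_INR. do 2 f_equal.
    replace (3 * / (3 * ((INR j + 2) * (INR j + 2)))) with (/ ((INR j + 2) * (INR j + 2))) by (field; lra).
    rewrite sqrt_inv, sqrt_square, Rinv_inv by lra. reflexivity. }
  replace (sqrt (3 * PI)) with (2 * sqrt 3 * (sqrt PI / 2))
    by (rewrite sqrt_mult by (generalize PI_RGT_0; lra); field).
  apply (is_lim_seq_scal_l _ (2 * sqrt 3) (sqrt PI / 2)).
  apply (is_lim_comp_seq gauss_int (fun j => INR j + 2) p_infty);
    [apply is_lim_gauss_int | exists O; easy |].
  apply is_lim_seq_le_p_loc with INR; [exists O; intros; lra | apply is_lim_seq_INR].
Qed.

Lemma is_lim_seq_tail_prob (t : R) : 0 < t ->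
  is_lim_seq (fun m => tail_prob m t) (levy_tail t / sqrt (3 * PI)).
Proof.
  intros Ht.
  assert (Hpi : 0 < sqrt (3 * PI)) by (apply sqrt_lt_R0; generalize PI_RGT_0; lra).
  apply (is_lim_seq_le_le_family _
           (fun j => tail_prob_lower t (small_scale j)) (fun j => tail_prob_upper t (small_scale j))
           (fun j => levy_tail t / (3 * sqrt (2 * small_scale j) + levy_tail (small_scale j)))
           (fun j => levy_tail t / levy_tail (small_scale j))).
  - destruct (proj2 (is_lim_seq_spec _ _) is_lim_seq_small_scale (mkposreal t Ht)) as [J HJ].
    exists J. intros j Hj. specialize (HJ j Hj). simpl in HJ.
    rewrite Rminus_0_r, Rabs_pos_eq in HJ by (left; apply small_scale_pos).
    apply tail_prob_sandwich_eventually; [split; [apply small_scale_pos | apply small_scale_le] | lra].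
  - intros j. apply is_lim_seq_tail_prob_lower, small_scale_pos. exact Ht.
  - intros j. apply is_lim_seq_tail_prob_upper, small_scale_pos. exact Ht.
  - replace (levy_tail t / sqrt (3 * PI)) with (levy_tail t / (3 * sqrt (2 * 0) + sqrt (3 * PI)))
      by (rewrite Rmult_0_r, sqrt_0; f_equal; ring).
    apply (is_lim_seq_div' (fun _ => _)); [apply is_lim_seq_const | | rewrite Rmult_0_r, sqrt_0; lra].
    apply is_lim_seq_plus'; [| apply is_lim_seq_levy_tail_small_scale].
    apply (is_lim_seq_mult' (fun _ => _)); [apply is_lim_seq_const |].
    rewrite Rmult_0_r. apply (is_lim_seq_continuous (fun j => 2 * small_scale j) 0 sqrt).
    + rewrite <- (Rmult_0_r 2).
      apply (is_lim_seq_mult' (fun _ => _)); [apply is_lim_seq_const | apply is_lim_seq_small_scale].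
    + apply continuity_pt_filterlim, continuity_pt_sqrt. lra.
  - apply (is_lim_seq_div' (fun _ => _));
      [apply is_lim_seq_const | apply is_lim_seq_levy_tail_small_scale | lra].
Qed.

Lemma ex_series_weight (m : nat) : ex_series (weight m).
Proof.
  assert (Hpos : forall k, (1 <= k)%nat -> ex_series (weight k)).
  { intros k Hk. assert (HK : 1 <= INR k) by (apply (le_INR 1), Hk).
    apply (Series_head_add_tail 2 (weight k)).
    - apply (Series_head_part_bounds 2 (weight k) (weight k 1)).
      intros [| [| n]] Hn; [rewrite weight_0 | | lia]; split; try apply weight_nonneg; lra.
    - apply (Series_tail_part_weight_bounds k 2 2 (2 / (INR k * INR k))); try lia.
      + apply Rdiv_lt_0_compat; nra.
      + simpl. right. field. lra. }
  destruct m as [| m]; [| apply Hpos; lia].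
  apply (ex_series_le (weight 0) (weight 1)); [| apply Hpos; lia].
  intros n. unfold norm; simpl. unfold abs; simpl.
  rewrite Rabs_pos_eq by apply weight_nonneg. apply weight_0_le_1.
Qed.

Theorem proposition6p3 :
  (forall m : nat, ex_series (weight m)) /\
  (forall t : R, 0 < t ->
     exists L : R,
       is_RInt_gen levy_density (at_point t) (Rbar_locally p_infty) L /\
       is_lim_seq (fun m : nat => tail_prob m t) L).
Proof.
  split; [exact ex_series_weight |].
  intros t Ht. exists (levy_tail t / sqrt (3 * PI)).
  split; [apply is_RInt_gen_levy_density | apply is_lim_seq_tail_prob]; exact Ht.
Qed.
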